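(* There is a universal constant $C>0$ such that for all sufficiently small $\varepsilon>0$ the following holds. Let $P$ be an irreducible, aperiodic transition matrix on a finite set $G$, reversible with respect to the probability measure $\pi$. If $A\subset S\subset G$ satisfy $\pi(A)\le\varepsilon\pi(S)$, then $$h_S(A)=\sum_{x\in A}h_S(x)\le C\,\frac{\varepsilon\log(1/\varepsilon)}{1-\lambda}.$$ In particular this applies to simple random walk on a finite regular graph whenever $|A|\le\varepsilon|S|$.
   Context: $(X_t)$ is the chain with transition matrix $P$. $\lambda=\max_{j>1}|\lambda_j|$, where $1=\lambda_1>\lambda_2\ge\dots\ge\lambda_n>-1$ are the eigenvalues of $P$. For $S\subset G$, $T_S=\inf\{t\ge0:X_t\in S\}$. The harmonic measure on $S$ from $y$ is $h_{y,S}(x)=\Pr_y[X_{T_S}=x]$ and $h_S(x)=\sum_y\pi(y)h_{y,S}(x)$ is the harmonic measure from stationarity. *)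

From Stdlib Require Import Reals Lra Lia Arith List.
Open Scope R_scope.

Definition rsum (n : nat) (f : nat -> R) : R :=
  fold_right Rplus 0 (map f (seq 0 n)).

Definition stochastic (n : nat) (P : nat -> nat -> R) : Prop :=
  (forall x y, (x < n)%nat -> (y < n)%nat -> 0 <= P x y) /\
  (forall x, (x < n)%nat -> rsum n (fun y => P x y) = 1).

Definition prob_measure (n : nat) (pi : nat -> R) : Prop :=
  (forall x, (x < n)%nat -> 0 <= pi x) /\ rsum n pi = 1.

Fixpoint Ppow (n : nat) (P : nat -> nat -> R) (t : nat) (x y : nat) : R :=
  match t with
  | O => if Nat.eq_dec x y then 1 else 0
  | S t' => rsum n (fun z => P x z * Ppow n P t' z y)
  end.

Definition irreducible (n : nat) (P : nat -> nat -> R) : Prop :=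
  forall x y, (x < n)%nat -> (y < n)%nat -> exists t, 0 < Ppow n P t x y.

Definition aperiodic (n : nat) (P : nat -> nat -> R) : Prop :=
  forall x, (x < n)%nat ->
    forall d : nat,
      (forall t : nat, (0 < t)%nat -> 0 < Ppow n P t x x -> Nat.divide d t) ->
      d = 1%nat.

Definition reversible (n : nat) (P : nat -> nat -> R) (pi : nat -> R) : Prop :=
  forall x y, (x < n)%nat -> (y < n)%nat -> pi x * P x y = pi y * P y x.

(* mu is an eigenvalue of P (for reversible P all eigenvalues are real) *)
Definition eigenvalue (n : nat) (P : nat -> nat -> R) (mu : R) : Prop :=
  exists v : nat -> R,
    (exists i, (i < n)%nat /\ v i <> 0) /\
    (forall i, (i < n)%nat -> rsum n (fun j => P i j * v j) = mu * v i).

(* lam = max_{j>1} |lambda_j|: since 1 is a simple eigenvalue (irreducibility)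
   this is the largest |mu| over eigenvalues mu <> 1 (0 if there is none). *)
Definition slem (n : nat) (P : nat -> nat -> R) (lam : R) : Prop :=
  is_lub (fun r => r = 0 \/ exists mu, eigenvalue n P mu /\ mu <> 1 /\ r = Rabs mu) lam.

(* hit S t y x = Pr_y[T_S <= t and X_{T_S} = x], T_S = inf{t >= 0 : X_t in S} *)
Fixpoint hit (n : nat) (P : nat -> nat -> R) (Sset : nat -> bool) (t : nat) (y x : nat) : R :=
  if Sset y then (if Nat.eq_dec y x then 1 else 0)
  else match t with
       | O => 0
       | S t' => rsum n (fun z => P y z * hit n P Sset t' z x)
       end.

(* harmonic measure h_{y,S}(x) = Pr_y[X_{T_S} = x] = lim_t Pr_y[T_S <= t, X_{T_S} = x] *)
Definition harmonic_from (n : nat) (P : nat -> nat -> R) (Sset : nat -> bool)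
  (h : nat -> nat -> R) : Prop :=
  forall y x, (y < n)%nat -> (x < n)%nat -> Un_cv (fun t => hit n P Sset t y x) (h y x).

Definition harm_stat (n : nat) (pi : nat -> R) (h : nat -> nat -> R) (A : nat -> bool) : R :=
  rsum n (fun x => if A x then rsum n (fun y => pi y * h y x) else 0).

Definition measure (n : nat) (pi : nat -> R) (A : nat -> bool) : R :=
  rsum n (fun x => if A x then pi x else 0).

From Stdlib Require Import Reals Lra Lia List ZArith FunctionalExtensionality Classical.
Open Scope R_scope.

(** With [surv_s y = Pr_y[X_0, ..., X_(s-1) not in S]], reversibility gives the
    last-step decomposition [Pr_pi[T_S <= t, X_(T_S) in A] = sum_(s <= t) a s] where
    [a s = <1_A, P surv_s>_pi].  Trivially [a s <= pi(A)].  The spectral gap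
    [|P g| <= lam |g|] for mean-zero [g] yields
    (1) [|surv_(r+1)|^2 <= q^r] with [q = 1 - (1 - lam) pi(S)], as [surv_(r+1)] vanishes on [S];
    (2) [a (k + r) <= |surv_r| (pi(A) + sqrt(pi(A)) lam^(k+1))], comparing [P^(k+1) surv_r]
        with its mean.
    Using the trivial bound up to a cutoff [T ~ ln(1/(eps pi(S))) / (2 (1 - lam))] and (1), (2)
    afterwards, the partial sums are [O(eps ln(1/eps) / (1 - lam))]; let [t -> oo]. *)

Lemma rsum_0 f : rsum 0 f = 0.
Proof. reflexivity. Qed.

Lemma rsum_S n f : rsum (S n) f = rsum n f + f n.
Proof.
  unfold rsum. rewrite seq_S, map_app, fold_right_app. simpl.
  generalize (f n). intro r.
  induction (map f (seq 0 n)); simpl; [ring | rewrite IHl; ring].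
Qed.

Lemma rsum_ext n f g : (forall i, (i < n)%nat -> f i = g i) -> rsum n f = rsum n g.
Proof.
  induction n; intros H; [reflexivity |].
  rewrite !rsum_S, IHn, H; auto.
Qed.

Lemma rsum_plus n f g : rsum n (fun i => f i + g i) = rsum n f + rsum n g.
Proof. induction n; [unfold rsum; simpl; ring |]. rewrite !rsum_S, IHn; ring. Qed.

Lemma rsum_minus n f g : rsum n (fun i => f i - g i) = rsum n f - rsum n g.
Proof. induction n; [unfold rsum; simpl; ring |]. rewrite !rsum_S, IHn; ring. Qed.

Lemma rsum_scal n c f : rsum n (fun i => c * f i) = c * rsum n f.
Proof. induction n; [unfold rsum; simpl; ring |]. rewrite !rsum_S, IHn; ring. Qed.

Lemma rsum_scal_r n c f : rsum n (fun i => f i * c) = rsum n f * c.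
Proof. induction n; [unfold rsum; simpl; ring |]. rewrite !rsum_S, IHn; ring. Qed.

Lemma rsum_zero n : rsum n (fun _ => 0) = 0.
Proof. induction n; [reflexivity |]. rewrite rsum_S, IHn; ring. Qed.

Lemma rsum_const N c : rsum N (fun _ => c) = INR N * c.
Proof. induction N; [rewrite rsum_0; simpl; ring |]. rewrite rsum_S, IHN, S_INR. ring. Qed.

Lemma rsum_le n f g : (forall i, (i < n)%nat -> f i <= g i) -> rsum n f <= rsum n g.
Proof.
  induction n; intros H; [unfold rsum; simpl; lra |].
  rewrite !rsum_S. assert (f n <= g n) by auto.
  assert (rsum n f <= rsum n g) by auto. lra.
Qed.

Lemma rsum_nonneg n f : (forall i, (i < n)%nat -> 0 <= f i) -> 0 <= rsum n f.
Proof. intros H. rewrite <- (rsum_zero n). apply rsum_le. auto. Qed.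

Lemma rsum_swap n m (f : nat -> nat -> R) :
  rsum n (fun x => rsum m (fun y => f x y)) = rsum m (fun y => rsum n (fun x => f x y)).
Proof.
  induction n.
  - unfold rsum at 1; simpl. rewrite rsum_zero. reflexivity.
  - rewrite rsum_S, IHn, <- rsum_plus. apply rsum_ext. intros; rewrite rsum_S; ring.
Qed.

Lemma rsum_term_le n f i :
  (forall j, (j < n)%nat -> 0 <= f j) -> (i < n)%nat -> f i <= rsum n f.
Proof.
  induction n; intros H Hi; [lia |].
  rewrite rsum_S.
  assert (0 <= rsum n f) by (apply rsum_nonneg; auto).
  destruct (Nat.eq_dec i n) as [-> | Hne]; [lra |].
  assert (f i <= rsum n f) by (apply IHn; auto; lia).
  assert (0 <= f n) by auto. lra.
Qed.

Lemma rsum_zero_terms n f :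
  (forall j, (j < n)%nat -> 0 <= f j) -> rsum n f = 0 -> forall i, (i < n)%nat -> f i = 0.
Proof.
  intros H H0 i Hi. pose proof (rsum_term_le n f i H Hi). pose proof (H i Hi). lra.
Qed.

Lemma rsum_pos_exists n f : 0 < rsum n f -> exists i, (i < n)%nat /\ 0 < f i.
Proof.
  induction n; intros H; [unfold rsum in H; simpl in H; lra |].
  rewrite rsum_S in H.
  destruct (Rlt_dec 0 (f n)).
  - exists n; split; auto.
  - destruct IHn as [i [Hi Hf]]; [lra |]. exists i; split; auto.
Qed.

Lemma rsum_delta n x c : (x < n)%nat ->
  rsum n (fun y => if Nat.eq_dec y x then c else 0) = c.
Proof.
  induction n; intros Hx; [lia |].
  rewrite rsum_S. destruct (Nat.eq_dec n x) as [<- | Hne].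
  - rewrite (rsum_ext n _ (fun _ => 0)); [rewrite rsum_zero; ring |].
    intros i Hi. destruct (Nat.eq_dec i n); [lia | auto].
  - rewrite IHn by lia. ring.
Qed.

Lemma rsum_split a b f : rsum (a + b) f = rsum a f + rsum b (fun i => f (a + i)%nat).
Proof.
  induction b.
  - rewrite Nat.add_0_r, rsum_0. ring.
  - rewrite Nat.add_succ_r, !rsum_S, IHb. ring.
Qed.

Lemma rsum_shift1 k f : rsum (S k) f = f 0%nat + rsum k (fun s => f (S s)).
Proof. change (S k) with (1 + k)%nat. rewrite rsum_split, rsum_S, rsum_0, Rplus_0_l. reflexivity. Qed.

Lemma rsum_mono_len n m f : (n <= m)%nat -> (forall i, 0 <= f i) -> rsum n f <= rsum m f.
Proof.
  intros Hnm H. replace m with (n + (m - n))%nat by lia.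
  rewrite rsum_split. assert (0 <= rsum (m - n) (fun i => f (n + i)%nat)) by (apply rsum_nonneg; auto).
  lra.
Qed.

Lemma rsum_pairs N f :
  rsum (1 + 2 * N) f = f 0%nat + rsum N (fun m => f (2 * m + 1)%nat + f (2 * m + 2)%nat).
Proof.
  induction N.
  - simpl. rewrite rsum_S, !rsum_0. ring.
  - replace (1 + 2 * S N)%nat with (S (S (2 * N + 1))) by lia.
    rewrite !rsum_S. replace (2 * N + 1)%nat with (1 + 2 * N)%nat at 1 by lia.
    rewrite IHN. replace (S (2 * N + 1)) with (2 * N + 2)%nat by lia. ring.
Qed.

Lemma Un_cv_const c : Un_cv (fun _ => c) c.
Proof. intros eps He. exists 0%nat. intros. unfold R_dist. rewrite Rminus_diag, Rabs_R0. auto. Qed.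

Lemma rsum_cv k (F : nat -> nat -> R) (G : nat -> R) :
  (forall i, (i < k)%nat -> Un_cv (fun t => F t i) (G i)) ->
  Un_cv (fun t => rsum k (F t)) (rsum k G).
Proof.
  induction k; intros H.
  - rewrite rsum_0. apply (Un_cv_ext (fun _ => 0)); [intros; rewrite rsum_0; auto | apply Un_cv_const].
  - rewrite rsum_S. apply (Un_cv_ext (fun t => rsum k (F t) + F t k)).
    + intros; rewrite rsum_S; auto.
    + apply CV_plus; auto.
Qed.

Lemma limit_le u l B : Un_cv u l -> (forall t, u t <= B) -> l <= B.
Proof. intros Hu Hb. apply (@Rle_cv_lim u (fun _ => B)); auto. apply Un_cv_const. Qed.

Lemma quad_disc a b c :
  0 <= c -> (forall t, 0 <= a + 2 * b * t + c * (t * t)) -> b * b <= a * c.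
Proof.
  intros Hc H.
  destruct (Rle_lt_or_eq_dec 0 c Hc) as [Hc' | <-].
  - specialize (H (- b / c)).
    replace (a + 2 * b * (- b / c) + c * (- b / c * (- b / c))) with (a - b * b / c) in H
      by (field; lra).
    assert (Hbc : b * b / c <= a) by lra.
    apply Rmult_le_compat_r with (r := c) in Hbc; [| lra].
    replace (b * b / c * c) with (b * b) in Hbc by (field; lra). lra.
  - destruct (Req_dec b 0) as [-> | Hb].
    + assert (0 <= a) by (specialize (H 0); lra). nra.
    + specialize (H (- (Rabs a + 1) / (2 * b))).
      replace (a + 2 * b * (- (Rabs a + 1) / (2 * b)) + 0 * (- (Rabs a + 1) / (2 * b) * (- (Rabs a + 1) / (2 * b))))
        with (a - (Rabs a + 1)) in H by (field; auto).
      pose proof (Rle_abs a). lra.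
Qed.

Definition ip (n : nat) (w : nat -> R) (f g : nat -> R) : R := rsum n (fun x => w x * f x * g x).
Definition mv (n : nat) (K : nat -> nat -> R) (f : nat -> R) (i : nat) : R :=
  rsum n (fun j => K i j * f j).
Definition one : nat -> R := fun _ => 1.

Section InnerProduct.
Variables (n : nat) (w : nat -> R).

Lemma ip_sym f g : ip n w f g = ip n w g f.
Proof. unfold ip. apply rsum_ext; intros; ring. Qed.

Lemma ip_ext f g f' g' : (forall x, (x < n)%nat -> f x = f' x) ->
  (forall x, (x < n)%nat -> g x = g' x) -> ip n w f g = ip n w f' g'.
Proof. intros H1 H2. unfold ip. apply rsum_ext. intros; rewrite H1, H2; auto. Qed.

Lemma ip_lin_l f g h a b : ip n w (fun x => a * g x + b * h x) f = a * ip n w g f + b * ip n w h f.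
Proof. unfold ip. rewrite <- !rsum_scal, <- rsum_plus. apply rsum_ext; intros; ring. Qed.

Lemma ip_lin_r f g h a b : ip n w f (fun x => a * g x + b * h x) = a * ip n w f g + b * ip n w f h.
Proof. unfold ip. rewrite <- !rsum_scal, <- rsum_plus. apply rsum_ext; intros; ring. Qed.

Lemma ip_scal_l f g a : ip n w (fun x => a * f x) g = a * ip n w f g.
Proof. unfold ip. rewrite <- rsum_scal. apply rsum_ext; intros; ring. Qed.

Lemma ip_scal_r f g a : ip n w f (fun x => a * g x) = a * ip n w f g.
Proof. unfold ip. rewrite <- rsum_scal. apply rsum_ext; intros; ring. Qed.

Hypothesis w_nonneg : forall x, (x < n)%nat -> 0 <= w x.

Lemma ip_nonneg f : 0 <= ip n w f f.
Proof.
  unfold ip. apply rsum_nonneg. intros i Hi. rewrite Rmult_assoc.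
  apply Rmult_le_pos; [auto | apply Rle_0_sqr].
Qed.

Lemma ip_CS f g : ip n w f g * ip n w f g <= ip n w f f * ip n w g g.
Proof.
  apply quad_disc; [apply ip_nonneg |]. intros t.
  pose proof (ip_nonneg (fun x => 1 * f x + t * g x)) as H.
  rewrite ip_lin_l, !ip_lin_r, (ip_sym g f) in H. lra.
Qed.

Lemma ip_le_sqrt f g : ip n w f g <= sqrt (ip n w f f) * sqrt (ip n w g g).
Proof.
  rewrite <- sqrt_mult by apply ip_nonneg.
  apply Rle_trans with (Rabs (ip n w f g)); [apply Rle_abs |].
  rewrite <- sqrt_Rsqr_abs. apply sqrt_le_1; [apply Rle_0_sqr | | unfold Rsqr; apply ip_CS].
  apply Rmult_le_pos; apply ip_nonneg.
Qed.

End InnerProduct.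

Section KernelOperator.
Variables (n : nat) (K : nat -> nat -> R).

Lemma mv_ext f g x : (forall y, (y < n)%nat -> f y = g y) -> mv n K f x = mv n K g x.
Proof. intros H. unfold mv. apply rsum_ext. intros; rewrite H; auto. Qed.

Lemma mv_lin f g a b x : mv n K (fun y => a * f y + b * g y) x = a * mv n K f x + b * mv n K g x.
Proof. unfold mv. rewrite <- !rsum_scal, <- rsum_plus. apply rsum_ext; intros; ring. Qed.

End KernelOperator.

Definition ev (y : nat) : nat -> R := fun z => if Nat.eq_dec z y then 1 else 0.

Lemma lin_matrix n (L : (nat -> R) -> (nat -> R)) :
  (forall f g a b, L (fun x => a * f x + b * g x) = fun x => a * L f x + b * L g x) ->
  (forall f g x, (x < n)%nat -> (forall y, (y < n)%nat -> f y = g y) -> L f x = L g x) ->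
  forall f x, (x < n)%nat -> L f x = mv n (fun x y => L (ev y) x) f x.
Proof.
  intros Hlin Hloc f x Hx.
  set (F := fun k z => rsum k (fun y => f y * ev y z)).
  assert (HF : forall k x, L (F k) x = rsum k (fun y => L (ev y) x * f y)).
  { induction k; intros x'.
    - replace (F 0%nat) with (fun z : nat => 0 * f z + 0 * f z).
      + rewrite Hlin, rsum_0. ring.
      + apply functional_extensionality; intros; unfold F; rewrite rsum_0; ring.
    - replace (F (S k)) with (fun z => 1 * F k z + f k * ev k z).
      + rewrite Hlin, rsum_S, IHk. ring.
      + apply functional_extensionality; intros; unfold F; rewrite rsum_S; ring. }
  rewrite (Hloc f (F n) x Hx).
  - rewrite HF. unfold mv. apply rsum_ext; intros; ring.
  - intros y Hy. unfold F, ev. symmetry.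
    transitivity (rsum n (fun z => if Nat.eq_dec z y then f y else 0)).
    + apply rsum_ext; intros z Hz.
      destruct (Nat.eq_dec y z), (Nat.eq_dec z y); subst; try ring; congruence.
    + apply rsum_delta; auto.
Qed.

From mathcomp Require all_boot all_algebra Rstruct.

Module LinearDichotomy.
Import all_boot all_algebra Rstruct.
Import GRing.Theory.
Local Open Scope ring_scope.

Lemma rsum_big n (f : nat -> R) : rsum n f = (\sum_(i < n) f i)%R.
Proof.
  elim: n => [|n IH]; first by rewrite big_ord0.
  by rewrite rsum_S big_ord_recr /= IH.
Qed.

Lemma left_inverse_of_row_free m (K : nat -> nat -> R) (A := \matrix_(i, j) K j i : 'M[R]_m.+1) :
  row_free A -> exists B : nat -> nat -> R, forall f i, lt i m.+1 ->
      f i = rsum m.+1 (fun j => Rmult (mv m.+1 K f j) (B j i)).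
Proof.
  move=> hA; have hU : A \in unitmx by rewrite -row_free_unit.
  set B := invmx A.
  exists (fun j i => B (inord j) (inord i)) => f i /ltP hi.
  set v : 'rV[R]_m.+1 := \row_k f k.
  have hv : v = ((v *m A) *m B)%R by rewrite -mulmxA mulmxV // mulmx1.
  have := congr1 (fun M : 'rV[R]_m.+1 => M 0 (Ordinal hi)) hv.
  rewrite /= mxE => ->.
  rewrite mxE rsum_big; apply: eq_bigr => j _.
  rewrite mxE /mv rsum_big; congr (_ * _)%R.
  + apply: eq_bigr => k _; rewrite !mxE; exact: GRing.mulrC.
  + by congr (B _ _); apply: val_inj; rewrite /= inordK.
Qed.

(** Singular case: a nonzero row of [kermx A] is a null vector of [K]. *)
Lemma null_vector_of_singular m (K : nat -> nat -> R) (A := \matrix_(i, j) K j i : 'M[R]_m.+1) :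
  ~~ row_free A -> exists f : nat -> R, (exists i, lt i m.+1 /\ f i <> R0) /\
      forall j, lt j m.+1 -> mv m.+1 K f j = R0.
Proof.
  move=> hA.
  have hK : kermx A != 0%R by rewrite kermx_eq0.
  have [i0 [j0 hij]] : exists i j, kermx A i j != 0%R.
    have : [exists i, exists j, kermx A i j != 0%R].
      apply: contraR hK => /existsPn hne; apply/eqP/matrixP => i j.
      by move: (hne i) => /existsPn /(_ j) /negPn /eqP ->; rewrite mxE.
    by move=> /existsP [i /existsP [j h]]; exists i, j.
  set u : 'rV[R]_m.+1 := row i0 (kermx A).
  have hu : (u *m A = 0)%R by rewrite /u -row_mul mulmx_ker row0.
  exists (fun k => u 0 (inord k)); split.
  - exists j0; split; first by apply/ltP.
    by rewrite inord_val /u mxE; apply/eqP.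
  - move=> j /ltP hj.
    have := congr1 (fun M : 'rV[R]_m.+1 => M 0 (Ordinal hj)) hu.
    rewrite /= !mxE; change R0 with (0%R : R) => <-.
    rewrite /mv rsum_big; apply: eq_bigr => k _.
    by rewrite [A _ _]mxE GRing.mulrC inord_val.
Qed.

Lemma kernel_dichotomy n K :
  (exists B : nat -> nat -> R, forall f i, lt i n ->
      f i = rsum n (fun j => Rmult (mv n K f j) (B j i))) \/
  (exists f : nat -> R, (exists i, lt i n /\ f i <> R0) /\
      forall j, lt j n -> mv n K f j = R0).
Proof.
  case: n => [|m].
    by left; exists (fun _ _ => 0%R) => f i /ltP; rewrite ltn0.
  case: (boolP (row_free (\matrix_(i, j) K j i : 'M[R]_m.+1))) => hA.
  - by left; apply: left_inverse_of_row_free.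
  - by right; apply: null_vector_of_singular.
Qed.
End LinearDichotomy.

Section Stochastic.
Variables (n : nat) (P : nat -> nat -> R).
Hypothesis Hs : stochastic n P.

Lemma mv_const c x : (x < n)%nat -> mv n P (fun _ => c) x = c.
Proof. intros Hx. destruct Hs as [_ H1]. unfold mv. rewrite rsum_scal_r, H1; auto; ring. Qed.

Lemma mv_one x : (x < n)%nat -> mv n P one x = 1.
Proof. apply mv_const. Qed.

Lemma mv_mono f g x : (x < n)%nat ->
  (forall y, (y < n)%nat -> f y <= g y) -> mv n P f x <= mv n P g x.
Proof.
  intros Hx H. destruct Hs as [H0 _]. unfold mv. apply rsum_le. intros i Hi.
  apply Rmult_le_compat_l; auto.
Qed.

Lemma jensen_row f x : (x < n)%nat -> mv n P f x * mv n P f x <= mv n P (fun y => f y * f y) x.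
Proof.
  intros Hx. destruct Hs as [H0 H1].
  pose proof (ip_CS n (P x) (fun y => H0 x y Hx) f one) as H.
  assert (E1 : ip n (P x) f one = mv n P f x) by (unfold ip, mv, one; apply rsum_ext; intros; ring).
  assert (E2 : ip n (P x) one one = 1)
    by (rewrite <- (H1 x Hx); unfold ip, one; apply rsum_ext; intros; ring).
  assert (E3 : ip n (P x) f f = mv n P (fun y => f y * f y) x) by (unfold ip, mv; apply rsum_ext; intros; ring).
  rewrite E1, E2, E3, Rmult_1_r in H. exact H.
Qed.

Lemma Ppow_nonneg t x y : (x < n)%nat -> (y < n)%nat -> 0 <= Ppow n P t x y.
Proof.
  revert x. induction t; intros x Hx Hy; simpl.
  - destruct (Nat.eq_dec x y); lra.
  - apply rsum_nonneg. intros z Hz. destruct Hs as [H0 _]. apply Rmult_le_pos; auto.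
Qed.

End Stochastic.

Section Reversible.
Variables (n : nat) (P : nat -> nat -> R) (pi : nat -> R).
Hypothesis Hs : stochastic n P.
Hypothesis Hpi : prob_measure n pi.
Hypothesis Hrev : reversible n P pi.

Lemma pi_nonneg x : (x < n)%nat -> 0 <= pi x.
Proof. destruct Hpi as [H _]. auto. Qed.

Lemma ip_one_one : ip n pi one one = 1.
Proof. destruct Hpi as [_ H]. rewrite <- H. unfold ip, one. apply rsum_ext; intros; ring. Qed.

Lemma stationary y : (y < n)%nat -> rsum n (fun x => pi x * P x y) = pi y.
Proof.
  intros Hy. transitivity (rsum n (fun x => pi y * P y x)).
  - apply rsum_ext; intros; apply Hrev; auto.
  - rewrite rsum_scal. destruct Hs as [_ H1]. rewrite H1; auto; ring.
Qed.

Lemma selfadj f g : ip n pi (mv n P f) g = ip n pi f (mv n P g).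
Proof.
  unfold ip, mv.
  transitivity (rsum n (fun x => rsum n (fun y => pi x * P x y * f y * g x))).
  - apply rsum_ext; intros. rewrite <- rsum_scal, <- rsum_scal_r. apply rsum_ext; intros; ring.
  - rewrite rsum_swap. apply rsum_ext; intros y Hy.
    rewrite <- rsum_scal. apply rsum_ext; intros x Hx.
    rewrite (Hrev x y) by auto. ring.
Qed.

Lemma mean_P f : ip n pi (mv n P f) one = ip n pi f one.
Proof. rewrite selfadj. apply ip_ext; auto. intros; unfold one. apply mv_const; auto. Qed.

Lemma contraction f : ip n pi (mv n P f) (mv n P f) <= ip n pi f f.
Proof.
  apply Rle_trans with (ip n pi one (mv n P (fun y => f y * f y))).
  - unfold ip, one. apply rsum_le. intros i Hi.
    pose proof (jensen_row n P Hs f i Hi). pose proof (pi_nonneg i Hi).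
    rewrite Rmult_1_r, Rmult_assoc. apply Rmult_le_compat_l; auto.
  - rewrite ip_sym, mean_P. right. unfold ip, one. apply rsum_ext; intros; ring.
Qed.

Lemma Ppow_stationary t y : (y < n)%nat -> rsum n (fun x => pi x * Ppow n P t x y) = pi y.
Proof.
  revert y. induction t; intros y Hy; simpl.
  - rewrite <- (rsum_delta n y (pi y) Hy). apply rsum_ext; intros x Hx.
    destruct (Nat.eq_dec x y); subst; ring.
  - transitivity (rsum n (fun x => rsum n (fun z => pi x * P x z * Ppow n P t z y))).
    + apply rsum_ext; intros. rewrite <- rsum_scal. apply rsum_ext; intros; ring.
    + rewrite rsum_swap, <- (IHt y Hy). apply rsum_ext; intros z Hz.
      rewrite rsum_scal_r, stationary; auto.
Qed.

Lemma pi_pos : irreducible n P -> forall y, (y < n)%nat -> 0 < pi y.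
Proof.
  intros Hirr y Hy. destruct Hpi as [Hp H1].
  destruct (rsum_pos_exists n pi) as [z [Hz Hpz]]; [lra |].
  destruct (Hirr z y Hz Hy) as [t Ht].
  rewrite <- (Ppow_stationary t y Hy).
  apply Rlt_le_trans with (pi z * Ppow n P t z y); [apply Rmult_lt_0_compat; auto |].
  apply (rsum_term_le n (fun x => pi x * Ppow n P t x y) z); auto.
  intros j Hj. apply Rmult_le_pos; auto. apply Ppow_nonneg; auto.
Qed.

End Reversible.

Lemma argmax n (g : nat -> R) : (1 <= n)%nat ->
  exists x, (x < n)%nat /\ forall y, (y < n)%nat -> g y <= g x.
Proof.
  induction n; intros Hn; [lia |].
  destruct (Nat.eq_dec n 0) as [-> | Hn0].
  - exists 0%nat. split; [lia |]. intros y Hy. replace y with 0%nat by lia. lra.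
  - destruct IHn as [x [Hx H]]; [lia |].
    destruct (Rle_dec (g n) (g x)).
    + exists x; split; [lia |]. intros y Hy.
      destruct (Nat.eq_dec y n); [subst; auto | apply H; lia].
    + exists n; split; [lia |]. intros y Hy.
      destruct (Nat.eq_dec y n); [subst; lra |]. specialize (H y ltac:(lia)). lra.
Qed.

Section MaximumPrinciple.
Variables (n : nat) (P : nat -> nat -> R) (c : R) (phi : nat -> R) (M2 : R).
Hypothesis Hs : stochastic n P.
Hypothesis Hc : c * c = 1.
Hypothesis Heig : forall y, (y < n)%nat -> mv n P phi y = c * phi y.
Hypothesis Hmax : forall y, (y < n)%nat -> phi y * phi y <= M2.

Lemma max_principle_step x z : (x < n)%nat -> phi x * phi x = M2 ->
  (z < n)%nat -> 0 < P x z -> phi z = c * phi x.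
Proof.
  intros Hx HM Hz HP. destruct Hs as [H0 H1].
  assert (Hcx : (c * phi x) * (c * phi x) = M2)
    by (replace ((c * phi x) * (c * phi x)) with ((c * c) * (phi x * phi x)) by ring; rewrite Hc, HM; ring).
  (* [sum_y P x y (M2 - c phi x phi y) = 0] with nonnegative terms. *)
  assert (Hsum : rsum n (fun y => P x y * (M2 - c * phi x * phi y)) = 0).
  { transitivity (M2 * rsum n (fun y => P x y) - c * phi x * mv n P phi x).
    - unfold mv. rewrite <- !rsum_scal, <- rsum_minus. apply rsum_ext; intros; ring.
    - rewrite H1, Heig by auto. lra. }
  assert (Hnn : forall y, (y < n)%nat -> 0 <= P x y * (M2 - c * phi x * phi y)).
  { intros y Hy. apply Rmult_le_pos; auto.
    pose proof (Hmax y Hy). pose proof (Rle_0_sqr (c * phi x - phi y)). unfold Rsqr in *. nra. }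
  pose proof (rsum_zero_terms n _ Hnn Hsum z Hz) as Hz0.
  apply Rmult_integral in Hz0. destruct Hz0 as [| Hz0]; [lra |].
  pose proof (Hmax z Hz). pose proof (Rle_0_sqr (phi z - c * phi x)). unfold Rsqr in *. nra.
Qed.

Lemma max_principle t x y : (x < n)%nat -> phi x * phi x = M2 -> 0 < Ppow n P t x y ->
  phi y = c ^ t * phi x /\ phi y * phi y = M2.
Proof.
  revert x. induction t; intros x Hx HM Hpos; simpl in Hpos.
  - destruct (Nat.eq_dec x y); [subst; simpl; split; [ring | auto] | lra].
  - destruct (rsum_pos_exists n _ Hpos) as [z [Hz Hzp]].
    destruct Hs as [H0 _].
    assert (HPxz : 0 < P x z).
    { destruct (Rle_lt_or_eq_dec 0 (P x z) (H0 x z Hx Hz)) as [| E]; auto. rewrite <- E in Hzp. lra. }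
    assert (Hpt : 0 < Ppow n P t z y).
    { destruct (Rle_lt_dec (Ppow n P t z y) 0); auto. nra. }
    assert (Hz' : phi z = c * phi x) by (apply max_principle_step; auto).
    assert (HMz : phi z * phi z = M2).
    { rewrite Hz'. replace (c * phi x * (c * phi x)) with ((c * c) * (phi x * phi x)) by ring. rewrite Hc, HM; ring. }
    destruct (IHt z Hz HMz Hpt) as [E1 E2]. split; auto.
    rewrite E1, Hz'. simpl. ring.
Qed.

End MaximumPrinciple.

Section UnitEigenvalues.
Variables (n : nat) (P : nat -> nat -> R).
Hypothesis Hs : stochastic n P.
Hypothesis Hn : (1 <= n)%nat.

Lemma harmonic_const phi : irreducible n P ->
  (forall y, (y < n)%nat -> mv n P phi y = phi y) ->
  exists c, forall y, (y < n)%nat -> phi y = c.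
Proof.
  intros Hirr Heig.
  destruct (argmax n (fun y => phi y * phi y) Hn) as [x0 [Hx0 Hmax]].
  exists (phi x0). intros y Hy.
  destruct (Hirr x0 y Hx0 Hy) as [t Ht].
  destruct (max_principle n P 1 phi (phi x0 * phi x0) Hs ltac:(ring)) with (t := t) (x := x0) (y := y)
    as [E _]; auto.
  - intros; rewrite Heig; auto; ring.
  - rewrite E, pow1. ring.
Qed.

(** Aperiodicity: [-1] is not an eigenvalue, since an eigenfunction for [-1] would force
    all return times to the maximum point to be even. *)
Lemma no_eigenvalue_minus1 phi : aperiodic n P ->
  (forall y, (y < n)%nat -> mv n P phi y = - phi y) ->
  (exists i, (i < n)%nat /\ phi i <> 0) -> False.
Proof.
  intros Hap Heig [i [Hi Hne]].
  destruct (argmax n (fun y => phi y * phi y) Hn) as [x0 [Hx0 Hmax]].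
  assert (Hx0ne : phi x0 <> 0).
  { intro E. pose proof (Hmax i Hi) as Hle. simpl in Hle. rewrite E in Hle.
    apply Hne. pose proof (Rle_0_sqr (phi i)). unfold Rsqr in *. nra. }
  assert (2 = 1)%nat; [| lia].
  apply (Hap x0 Hx0 2%nat). intros t Ht Hpos.
  destruct (max_principle n P (-1) phi (phi x0 * phi x0) Hs ltac:(ring)) with (t := t) (x := x0) (y := x0)
    as [E _]; auto.
  - intros; rewrite Heig; auto; ring.
  - destruct (Nat.Even_or_Odd t) as [[k Hk] | [k Hk]].
    + exists k. lia.
    + exfalso. subst t. replace (2 * k + 1)%nat with (S (2 * k)) in E by lia.
      rewrite pow_1_odd in E. apply Hx0ne. lra.
Qed.

End UnitEigenvalues.

(** Spectral gap of a reversible, irreducible, aperiodic chain, without the spectral theorem.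
    Let [Q f = P (f - <f,1>)] and [m = sup { |Q f|^2 : |f| = 1 }] (norms in [L^2(pi)]).
    Every eigenvalue [mu <> 1] has [mu^2 <= m]; conversely [m] is attained: the positive
    semidefinite operator [m - Q^* Q] has a nonzero null vector (else its inverse would be
    bounded, contradicting the definition of [m] as a supremum), which yields an eigenvalue
    [mu <> 1] with [mu^2 = m].  Hence [lam^2 = m], [m < 1] by aperiodicity, and
    [|P g| <= lam |g|] for every [g] of mean zero. *)
Section SpectralGap.
Variables (n : nat) (P : nat -> nat -> R) (pi : nat -> R).
Hypothesis Hs : stochastic n P.
Hypothesis Hpi : prob_measure n pi.
Hypothesis Hrev : reversible n P pi.
Hypothesis Hpos : forall x, (x < n)%nat -> 0 < pi x.

Let pinn : forall x, (x < n)%nat -> 0 <= pi x := pi_nonneg n pi Hpi.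
Let ip_nn f : 0 <= ip n pi f f := ip_nonneg n pi pinn f.

Lemma norm_pos v i : (i < n)%nat -> v i <> 0 -> 0 < ip n pi v v.
Proof.
  intros Hi Hvi. unfold ip. apply Rlt_le_trans with (pi i * v i * v i).
  - rewrite Rmult_assoc. apply Rmult_lt_0_compat; auto.
    destruct (Rlt_dec 0 (v i)); [nra |]. assert (v i < 0) by lra. nra.
  - apply (rsum_term_le n (fun x => pi x * v x * v x) i); auto.
    intros j Hj. rewrite Rmult_assoc. apply Rmult_le_pos; [apply pinn; auto | apply Rle_0_sqr].
Qed.

Definition center (f : nat -> R) : nat -> R := fun x => f x - ip n pi f one.

Lemma center_as_comb f : forall x, center f x = 1 * f x + (- ip n pi f one) * one x.
Proof. intros x. unfold center, one. ring. Qed.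

Lemma mean_center f : ip n pi (center f) one = 0.
Proof.
  rewrite (ip_ext n pi _ _ _ one (fun x _ => center_as_comb f x)) by auto.
  rewrite ip_lin_l, ip_one_one; auto. ring.
Qed.

Lemma ip_center_l f g : ip n pi (center f) g = ip n pi f g - ip n pi f one * ip n pi g one.
Proof.
  rewrite (ip_ext n pi _ g _ g (fun x _ => center_as_comb f x)) by auto.
  rewrite ip_lin_l, (ip_sym n pi one g). ring.
Qed.

Lemma center_selfadj f g : ip n pi (center f) g = ip n pi f (center g).
Proof. rewrite ip_center_l, (ip_sym n pi f (center g)), ip_center_l, (ip_sym n pi g f). ring. Qed.

Lemma center_lin f g a b : center (fun x => a * f x + b * g x) = fun x => a * center f x + b * center g x.
Proof. apply functional_extensionality; intros x. unfold center. rewrite ip_lin_l. ring. Qed.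

Definition Q (f : nat -> R) : nat -> R := mv n P (center f).

Lemma Q_lin f g a b : Q (fun x => a * f x + b * g x) = fun x => a * Q f x + b * Q g x.
Proof. apply functional_extensionality; intros; unfold Q; rewrite center_lin; apply mv_lin. Qed.

Lemma Q_mean_zero g : ip n pi g one = 0 -> forall x, Q g x = mv n P g x.
Proof. intros Hg x. unfold Q, center. apply mv_ext. intros; rewrite Hg; ring. Qed.

Lemma Q_le f : ip n pi (Q f) (Q f) <= ip n pi f f.
Proof.
  unfold Q. eapply Rle_trans; [apply contraction; auto |].
  rewrite ip_center_l, mean_center, (ip_sym n pi f (center f)), ip_center_l.
  pose proof (Rle_0_sqr (ip n pi f one)). unfold Rsqr in *. lra.
Qed.

Definition Rayleigh (r : R) : Prop := exists f, ip n pi f f = 1 /\ r = ip n pi (Q f) (Q f).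

Lemma Rayleigh_bound : bound Rayleigh.
Proof. exists 1. intros r [f [H1 ->]]. rewrite <- H1. apply Q_le. Qed.

Lemma Rayleigh_one : Rayleigh (ip n pi (Q one) (Q one)).
Proof. exists one. split; auto. apply ip_one_one; auto. Qed.

Definition m : R :=
  proj1_sig (completeness Rayleigh Rayleigh_bound (ex_intro _ _ Rayleigh_one)).

Lemma m_lub : is_lub Rayleigh m.
Proof. unfold m. destruct completeness; auto. Qed.

Lemma m_le1 : m <= 1.
Proof. destruct m_lub as [_ H]. apply H. intros r [f [H1 ->]]. rewrite <- H1. apply Q_le. Qed.

Lemma m_ge0 : 0 <= m.
Proof. destruct m_lub as [H _]. eapply Rle_trans; [apply ip_nn | apply H, Rayleigh_one]. Qed.

Lemma Q_bound f : ip n pi (Q f) (Q f) <= m * ip n pi f f.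
Proof.
  destruct (Rle_lt_or_eq_dec 0 (ip n pi f f) (ip_nn f)) as [Hp | Hz].
  - set (s := ip n pi f f) in *.
    assert (Hsq : 0 < sqrt s) by (apply sqrt_lt_R0; auto).
    assert (Hss : sqrt s * sqrt s = s) by (apply sqrt_sqrt; lra).
    set (g := fun x => / sqrt s * f x + 0 * f x).
    assert (Hg : ip n pi g g = 1).
    { unfold g. rewrite ip_lin_l, !ip_lin_r. fold s.
      replace (/ sqrt s * (/ sqrt s * s + 0 * s) + 0 * (/ sqrt s * s + 0 * s))
        with (s / (sqrt s * sqrt s)) by (field; lra).
      rewrite Hss. field. lra. }
    assert (HQ : ip n pi (Q g) (Q g) <= m) by (destruct m_lub as [H _]; apply H; exists g; auto).
    unfold g in HQ. rewrite Q_lin, ip_lin_l, !ip_lin_r in HQ.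
    replace (/ sqrt s * (/ sqrt s * ip n pi (Q f) (Q f) + 0 * ip n pi (Q f) (Q f)) +
        0 * (/ sqrt s * ip n pi (Q f) (Q f) + 0 * ip n pi (Q f) (Q f)))
      with (ip n pi (Q f) (Q f) / (sqrt s * sqrt s)) in HQ by (field; lra).
    rewrite Hss in HQ. apply Rmult_le_compat_r with (r := s) in HQ; [| lra].
    replace (ip n pi (Q f) (Q f) / s * s) with (ip n pi (Q f) (Q f)) in HQ by (field; lra).
    lra.
  - pose proof (Q_le f). rewrite <- Hz in *. lra.
Qed.

Lemma eigenvalue_sq_le mu : eigenvalue n P mu -> mu <> 1 -> mu * mu <= m.
Proof.
  intros [v [[i [Hi Hvi]] Hv]] Hmu.
  assert (Hmv : forall x, (x < n)%nat -> mv n P v x = mu * v x) by (intros; apply Hv; auto).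
  assert (Hmean : ip n pi v one = 0).
  { pose proof (mean_P n P pi Hs Hrev v) as E.
    rewrite (ip_ext n pi _ one (fun x => mu * v x) one Hmv) in E by auto.
    rewrite ip_scal_l in E. apply Rmult_eq_reg_l with (r := mu - 1); lra. }
  pose proof (Q_bound v) as HB.
  rewrite (ip_ext n pi (Q v) (Q v) (fun x => mu * v x) (fun x => mu * v x)) in HB
    by (intros; rewrite Q_mean_zero, Hmv; auto).
  rewrite ip_scal_l, ip_scal_r in HB.
  pose proof (norm_pos v i Hi Hvi).
  apply Rmult_le_reg_r with (r := ip n pi v v); auto. lra.
Qed.

Lemma near_maximizer d : 0 < d -> exists f, ip n pi f f = 1 /\ m - d <= ip n pi (Q f) (Q f).
Proof.
  intros Hd. apply NNPP. intros Hn.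
  destruct m_lub as [_ H].
  assert (m <= m - d); [| lra].
  apply H. intros r [f [H1 ->]].
  destruct (Rle_dec (ip n pi (Q f) (Q f)) (m - d)); auto.
  exfalso. apply Hn. exists f. split; auto. lra.
Qed.

Definition bf (f g : nat -> R) : R := m * ip n pi f g - ip n pi (Q f) (Q g).

Lemma bf_nonneg f : 0 <= bf f f.
Proof. unfold bf. pose proof (Q_bound f). lra. Qed.

Lemma bf_CS f g : bf f g * bf f g <= bf f f * bf g g.
Proof.
  apply quad_disc; [apply bf_nonneg |]. intros t.
  pose proof (bf_nonneg (fun x => 1 * f x + t * g x)) as H.
  unfold bf in *. rewrite Q_lin, !ip_lin_l, !ip_lin_r in H.
  rewrite (ip_sym n pi g f), (ip_sym n pi (Q g) (Q f)) in H. nra.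
Qed.

(** The operator [Cop = m - Q^* Q] representing [bf]; here [Q^* = center o P]. *)
Definition Cop (f : nat -> R) : nat -> R := fun x => m * f x + (-1) * center (mv n P (Q f)) x.

Lemma ip_Cop g f : ip n pi g (Cop f) = bf g f.
Proof.
  unfold Cop, bf. rewrite ip_lin_r, <- center_selfadj, <- (selfadj n P pi Hrev).
  unfold Q. ring.
Qed.

Lemma Cop_bound f : ip n pi (Cop f) (Cop f) <= m * bf f f.
Proof.
  set (X := ip n pi (Cop f) (Cop f)).
  pose proof (bf_CS (Cop f) f) as HCS. rewrite <- ip_Cop in HCS. fold X in HCS.
  assert (Hb : bf (Cop f) (Cop f) <= m * X) by (unfold bf, X; pose proof (ip_nn (Q (Cop f))); lra).
  pose proof (bf_nonneg f). pose proof m_ge0. assert (0 <= X) by apply ip_nn.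
  destruct (Rle_lt_or_eq_dec 0 X ltac:(auto)) as [HXp | HX0]; [| rewrite <- HX0; nra].
  apply Rmult_le_reg_r with (r := X); auto. nra.
Qed.

Lemma Cop_lin f g a b : Cop (fun x => a * f x + b * g x) = fun x => a * Cop f x + b * Cop g x.
Proof.
  apply functional_extensionality; intros x. unfold Cop. rewrite Q_lin.
  replace (mv n P (fun y => a * Q f y + b * Q g y)) with (fun y => a * mv n P (Q f) y + b * mv n P (Q g) y)
    by (apply functional_extensionality; intros; rewrite mv_lin; auto).
  rewrite center_lin. ring.
Qed.

Lemma Cop_local f g x : (x < n)%nat -> (forall y, (y < n)%nat -> f y = g y) -> Cop f x = Cop g x.
Proof.
  intros Hx H.
  assert (HQ : forall y, Q f y = Q g y).
  { intros y. unfold Q, center. apply mv_ext. intros. rewrite H, (ip_ext n pi f one g one); auto. }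
  unfold Cop, center. rewrite H by auto.
  rewrite (mv_ext n P (Q f) (Q g)), (ip_ext n pi (mv n P (Q f)) one (mv n P (Q g)) one); auto.
  intros; apply mv_ext; auto.
Qed.

Definition Kc (x y : nat) : R := Cop (ev y) x.

Lemma Kc_mv f x : (x < n)%nat -> mv n Kc f x = Cop f x.
Proof. intros Hx. symmetry. apply (lin_matrix n Cop Cop_lin Cop_local f x Hx). Qed.

Lemma left_inverse_bound (B : nat -> nat -> R) :
  (forall f i, (i < n)%nat -> f i = rsum n (fun j => mv n Kc f j * B j i)) ->
  forall f, ip n pi f f <=
    rsum n (fun j => / pi j) * rsum n (fun i => rsum n (fun j => B j i * B j i)) * ip n pi (Cop f) (Cop f).
Proof.
  intros HB f.
  set (Z := rsum n (fun j => Cop f j * Cop f j)).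
  assert (HZ : Z <= rsum n (fun j => / pi j) * ip n pi (Cop f) (Cop f)).
  { unfold Z. rewrite <- rsum_scal_r. apply rsum_le. intros j Hj.
    assert (pi j * Cop f j * Cop f j <= ip n pi (Cop f) (Cop f)).
    { apply (rsum_term_le n (fun x => pi x * Cop f x * Cop f x) j); auto.
      intros k Hk. rewrite Rmult_assoc. apply Rmult_le_pos; [apply pinn; auto | apply Rle_0_sqr]. }
    pose proof (Hpos j Hj).
    replace (Cop f j * Cop f j) with (/ pi j * (pi j * Cop f j * Cop f j)) by (field; lra).
    apply Rmult_le_compat_l; auto. apply Rlt_le, Rinv_0_lt_compat; auto. }
  assert (Hfi : forall i, (i < n)%nat -> f i * f i <= Z * rsum n (fun j => B j i * B j i)).
  { intros i Hi. rewrite (HB f i Hi).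
    pose proof (ip_CS n (fun _ => 1) (fun _ _ => Rle_0_1) (mv n Kc f) (fun j => B j i)) as H.
    assert (E1 : ip n (fun _ => 1) (mv n Kc f) (fun j => B j i) = rsum n (fun j => mv n Kc f j * B j i))
      by (unfold ip; apply rsum_ext; intros; ring).
    assert (E2 : ip n (fun _ => 1) (mv n Kc f) (mv n Kc f) = Z)
      by (unfold ip, Z; apply rsum_ext; intros; rewrite Kc_mv; auto; ring).
    assert (E3 : ip n (fun _ => 1) (fun j => B j i) (fun j => B j i) = rsum n (fun j => B j i * B j i))
      by (unfold ip; apply rsum_ext; intros; ring).
    rewrite E1, E2, E3 in H. exact H. }
  assert (Hsum : ip n pi f f <= Z * rsum n (fun i => rsum n (fun j => B j i * B j i))).
  { unfold ip. rewrite <- rsum_scal. apply rsum_le. intros i Hi.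
    apply Rle_trans with (f i * f i); [| apply Hfi; auto].
    assert (pi i <= 1).
    { destruct Hpi as [Hp Hsum]. rewrite <- Hsum. apply (rsum_term_le n pi i); auto. }
    pose proof (Rle_0_sqr (f i)). unfold Rsqr in *. pose proof (Hpos i Hi). nra. }
  assert (0 <= rsum n (fun i => rsum n (fun j => B j i * B j i)))
    by (apply rsum_nonneg; intros; apply rsum_nonneg; intros; apply Rle_0_sqr).
  nra.
Qed.

Lemma Cop_null : 0 < m -> exists v, (exists i, (i < n)%nat /\ v i <> 0) /\
  forall j, (j < n)%nat -> Cop v j = 0.
Proof.
  intros Hm.
  destruct (LinearDichotomy.kernel_dichotomy n Kc) as [[B HB] | [v [Hv0 Hv]]].
  - exfalso.
    set (K := rsum n (fun j => / pi j) * rsum n (fun i => rsum n (fun j => B j i * B j i))).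
    assert (HK : 0 <= K).
    { apply Rmult_le_pos; apply rsum_nonneg; intros.
      - apply Rlt_le, Rinv_0_lt_compat; auto.
      - apply rsum_nonneg; intros; apply Rle_0_sqr. }
    set (d := / (K * m + 1)).
    assert (Hd : 0 < d) by (apply Rinv_0_lt_compat; nra).
    destruct (near_maximizer d Hd) as [f [Hf1 Hf2]].
    assert (Hbf : bf f f <= d) by (unfold bf; rewrite Hf1; lra).
    pose proof (left_inverse_bound B HB f) as Hinv. fold K in Hinv. rewrite Hf1 in Hinv.
    pose proof (Cop_bound f).
    assert (HKmd : K * m * d < 1).
    { unfold d. apply Rmult_lt_reg_r with (r := K * m + 1); [nra |].
      rewrite Rmult_assoc, Rinv_l by nra. lra. }
    assert (K * ip n pi (Cop f) (Cop f) <= K * (m * d)).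
    { apply Rmult_le_compat_l; auto. eapply Rle_trans; [eassumption |].
      apply Rmult_le_compat_l; lra. }
    nra.
  - exists v. split; auto. intros j Hj. rewrite <- Kc_mv; auto.
Qed.

Lemma Cop_null_eigen v : 0 < m -> (forall j, (j < n)%nat -> Cop v j = 0) ->
  ip n pi v one = 0 /\ forall j, (j < n)%nat -> mv n P (mv n P v) j = m * v j.
Proof.
  intros Hm Hv.
  assert (HC : forall j, (j < n)%nat -> m * v j = center (mv n P (Q v)) j).
  { intros j Hj. pose proof (Hv j Hj) as E. unfold Cop in E. lra. }
  assert (Hmean : ip n pi v one = 0).
  { assert (E : ip n pi (fun x => m * v x) one = ip n pi (center (mv n P (Q v))) one)
      by (apply ip_ext; auto).
    rewrite ip_scal_l, mean_center in E. apply Rmult_eq_reg_l with (r := m); lra. }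
  split; auto. intros j Hj.
  rewrite HC by auto. unfold center.
  rewrite (mv_ext n P (Q v) (mv n P v)) by (intros; apply Q_mean_zero; auto).
  rewrite (mean_P n P pi Hs Hrev). unfold Q. rewrite (mean_P n P pi Hs Hrev), mean_center. ring.
Qed.

Hypothesis Hirr : irreducible n P.
Hypothesis Hap : aperiodic n P.
Hypothesis Hn : (1 <= n)%nat.

(** If [P^2 v = s^2 v] for a nonzero mean-zero [v] and [s > 0], then [s] or [-s] is an
    eigenvalue of [P] different from [1]: take [P v + s v] if it is nonzero, else [v]. *)
Lemma eigenvalue_of_square_root v s : 0 < s -> ip n pi v one = 0 ->
  (exists i, (i < n)%nat /\ v i <> 0) ->
  (forall j, (j < n)%nat -> mv n P (mv n P v) j = s * s * v j) ->
  exists mu, eigenvalue n P mu /\ mu <> 1 /\ mu * mu = s * s.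
Proof.
  intros Hs0 Hmean [i [Hi Hvi]] Hv.
  set (w := fun x => 1 * mv n P v x + s * v x).
  destruct (classic (exists k, (k < n)%nat /\ w k <> 0)) as [[k [Hk Hwk]] | Hw0].
  - assert (Hw : forall j, (j < n)%nat -> mv n P w j = s * w j).
    { intros j Hj. unfold w at 1. rewrite mv_lin, Hv by auto. unfold w. ring. }
    exists s. split; [| split; [| ring]].
    + exists w. split; [exists k; auto |]. exact Hw.
    + intros ->.
      destruct (harmonic_const n P Hs Hn w Hirr) as [c Hc].
      { intros j Hj. rewrite Hw; auto; ring. }
      assert (Ew : ip n pi w one = 0).
      { unfold w. rewrite ip_lin_l, (mean_P n P pi Hs Hrev), Hmean. ring. }
      rewrite (ip_ext n pi w one (fun x => c * one x) one) in Ew by (auto; intros; unfold one; rewrite Hc; auto; ring).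
      rewrite ip_scal_l, ip_one_one in Ew; auto.
      apply Hwk. rewrite Hc; auto. lra.
  - exists (- s). split; [| split; [lra | ring]].
    exists v. split; [exists i; auto |]. intros j Hj.
    assert (w j = 0) by (destruct (Req_dec (w j) 0); auto; exfalso; apply Hw0; exists j; auto).
    unfold w in H. change (rsum n (fun y => P j y * v y)) with (mv n P v j). lra.
Qed.

Lemma m_attained : 0 < m -> exists mu, eigenvalue n P mu /\ mu <> 1 /\ mu * mu = m.
Proof.
  intros Hm.
  destruct (Cop_null Hm) as [v [Hv0 Hv]].
  destruct (Cop_null_eigen v Hm Hv) as [Hmean HPP].
  assert (Hsq : sqrt m * sqrt m = m) by (apply sqrt_sqrt; lra).
  rewrite <- Hsq. apply (eigenvalue_of_square_root v); auto.
  - apply sqrt_lt_R0; auto.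
  - intros; rewrite Hsq; auto.
Qed.

(** Aperiodicity: [m < 1], since [m = 1] would make [-1] an eigenvalue. *)
Lemma m_lt1 : m < 1.
Proof.
  destruct (Rle_lt_or_eq_dec m 1 m_le1) as [H | H]; auto. exfalso.
  destruct (m_attained ltac:(lra)) as [mu [[v [Hvne Hv]] [Hmu1 Hmu2]]].
  assert (mu = -1) as ->.
  { rewrite H in Hmu2. assert ((mu - 1) * (mu + 1) = 0) by nra.
    apply Rmult_integral in H0. destruct H0; lra. }
  apply (no_eigenvalue_minus1 n P Hs Hn v Hap); auto.
  intros y Hy. unfold mv. rewrite Hv; auto. ring.
Qed.

Theorem spectral_gap lam : slem n P lam ->
  0 <= lam /\ lam < 1 /\
  forall g, ip n pi g one = 0 -> ip n pi (mv n P g) (mv n P g) <= lam * lam * ip n pi g g.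
Proof.
  intros [Hub Hleast].
  assert (H0 : 0 <= lam) by (apply Hub; left; auto).
  assert (Hup : lam <= sqrt m).
  { apply Hleast. intros r [-> | [mu [Hmu [Hmu1 ->]]]]; [apply sqrt_pos |].
    rewrite <- sqrt_Rsqr_abs. apply sqrt_le_1; [apply Rle_0_sqr | apply m_ge0 |].
    apply eigenvalue_sq_le; auto. }
  assert (Hlow : m <= lam * lam).
  { destruct (Rle_lt_or_eq_dec 0 m m_ge0) as [Hm | <-]; [| nra].
    destruct (m_attained Hm) as [mu [Hmu [Hmu1 Hmu2]]].
    assert (Rabs mu <= lam) by (apply Hub; right; exists mu; auto).
    assert (Rabs mu * Rabs mu = m) by (rewrite <- Rabs_mult, Hmu2; apply Rabs_pos_eq, m_ge0).
    pose proof (Rabs_pos mu). nra. }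
  split; auto. split.
  - apply Rle_lt_trans with (sqrt m); auto.
    rewrite <- sqrt_1. apply sqrt_lt_1; [apply m_ge0 | lra | apply m_lt1].
  - intros g Hg.
    rewrite (ip_ext n pi (mv n P g) (mv n P g) (Q g) (Q g)) by (intros; rewrite Q_mean_zero; auto).
    eapply Rle_trans; [apply Q_bound |]. apply Rmult_le_compat_r; auto.
Qed.

End SpectralGap.

(** Let [kill w] be the measure [w] pushed
    one step by the chain killed on [S], and [surv s y = Pr_y[X_0, ..., X_(s-1) not in S]].
    Starting from [pi], the probability of hitting [S] at time [s] at the point [x] is
    [(kill^s pi) x = pi x (P surv_s) x] by reversibility. *)
Section Hitting.
Variables (n : nat) (P : nat -> nat -> R) (pi : nat -> R) (S : nat -> bool).

Definition kill (w : nat -> R) (z : nat) : R := rsum n (fun y => if S y then 0 else w y * P y z).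

Fixpoint killed (w : nat -> R) (s : nat) : nat -> R :=
  match s with O => w | Datatypes.S s' => killed (kill w) s' end.

Lemma killed_succ s : forall w, killed w (Datatypes.S s) = kill (killed w s).
Proof.
  induction s; intros w; [reflexivity |].
  change (killed w (Datatypes.S (Datatypes.S s))) with (killed (kill w) (Datatypes.S s)).
  rewrite IHs. reflexivity.
Qed.

(** The hitting point is reached at time [0] (if the start is in [S]) or after one killed step. *)
Lemma hit_split w t x : (x < n)%nat -> S x = true ->
  rsum n (fun y => w y * hit n P S (Datatypes.S t) y x) =
  w x + rsum n (fun y => kill w y * hit n P S t y x).
Proof.
  intros Hx HSx.
  transitivity (rsum n (fun y => if Nat.eq_dec y x then w x else 0) +
                rsum n (fun y => if S y then 0 else w y * rsum n (fun z => P y z * hit n P S t z x))).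
  - rewrite <- rsum_plus. apply rsum_ext; intros y Hy. simpl.
    destruct (Nat.eq_dec y x) as [-> | Hne]; [rewrite HSx; ring |].
    destruct (S y); ring.
  - rewrite rsum_delta by auto. f_equal. unfold kill.
    transitivity (rsum n (fun y => rsum n (fun z => (if S y then 0 else w y * P y z) * hit n P S t z x))).
    + apply rsum_ext; intros y Hy. destruct (S y).
      * rewrite (rsum_ext n _ (fun _ => 0)); [rewrite rsum_zero; ring | intros; ring].
      * rewrite <- rsum_scal. apply rsum_ext; intros; ring.
    + rewrite rsum_swap. apply rsum_ext; intros; rewrite rsum_scal_r; auto.
Qed.

Lemma hit_as_killed t : forall w x, (x < n)%nat -> S x = true ->
  rsum n (fun y => w y * hit n P S t y x) = rsum (Datatypes.S t) (fun s => killed w s x).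
Proof.
  induction t; intros w x Hx HSx.
  - rewrite rsum_S, rsum_0, Rplus_0_l. change (killed w 0 x) with (w x).
    rewrite <- (rsum_delta n x (w x) Hx). apply rsum_ext; intros y Hy. simpl.
    destruct (Nat.eq_dec y x) as [-> | Hne]; [rewrite HSx; destruct (Nat.eq_dec x x); [ring | congruence] |].
    destruct (S y); [destruct (Nat.eq_dec y x); [congruence |] |]; ring.
  - rewrite hit_split, rsum_shift1, IHt by auto. reflexivity.
Qed.

Fixpoint surv (s : nat) : nat -> R :=
  match s with
  | O => one
  | Datatypes.S s' => fun y => if S y then 0 else mv n P (surv s') y
  end.

Hypothesis Hs : stochastic n P.
Hypothesis Hrev : reversible n P pi.

Lemma killed_pi s : forall z, (z < n)%nat -> killed pi s z = pi z * mv n P (surv s) z.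
Proof.
  induction s; intros z Hz.
  - simpl. unfold one. rewrite mv_const; auto. ring.
  - rewrite killed_succ. unfold kill. simpl surv. unfold mv at 1. rewrite <- rsum_scal.
    apply rsum_ext; intros y Hy. rewrite IHs by auto.
    destruct (S y); [ring |].
    transitivity ((pi y * P y z) * mv n P (surv s) y); [ring |].
    rewrite (Hrev y z) by auto. ring.
Qed.

Definition hit_at (A : nat -> bool) (s : nat) : R :=
  rsum n (fun x => if A x then pi x * mv n P (surv s) x else 0).

Lemma truncated_harmonic (A : nat -> bool) t :
  (forall x, (x < n)%nat -> A x = true -> S x = true) ->
  rsum n (fun x => if A x then rsum n (fun y => pi y * hit n P S t y x) else 0) =
  rsum (Datatypes.S t) (hit_at A).
Proof.
  intros HAS. unfold hit_at.
  transitivity (rsum n (fun x => rsum (Datatypes.S t) (fun s => if A x then pi x * mv n P (surv s) x else 0))).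
  - apply rsum_ext; intros x Hx. destruct (A x) eqn:EA.
    + rewrite hit_as_killed by auto. apply rsum_ext; intros; apply killed_pi; auto.
    + rewrite rsum_zero; auto.
  - apply rsum_swap.
Qed.

End Hitting.

Lemma harm_limit n P pi (S A : nat -> bool) (h : nat -> nat -> R) :
  harmonic_from n P S h ->
  Un_cv (fun t => rsum n (fun x => if A x then rsum n (fun y => pi y * hit n P S t y x) else 0))
        (harm_stat n pi h A).
Proof.
  intros Hh. unfold harm_stat.
  apply (rsum_cv n (fun t x => if A x then rsum n (fun y => pi y * hit n P S t y x) else 0)).
  intros x Hx. destruct (A x); [| apply Un_cv_const].
  apply (rsum_cv n (fun t y => pi y * hit n P S t y x)).
  intros y Hy. apply CV_mult; [apply Un_cv_const | apply Hh; auto].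
Qed.

(** Two facts:
    (1) the survival function [surv r] is spread over at most [1 - pi(S)] of the mass, so its
        norm decays geometrically with rate [q = 1 - (1 - lam) pi(S)];
    (2) after [k + 1] further steps, [P^(k+1) surv_r] is within [lam^(k+1) |surv_r|] of its mean,
        so [a (k + r) <= |surv_r| (pi(A) + sqrt(pi(A)) lam^(k+1))]. *)
Section Decay.
Variables (n : nat) (P : nat -> nat -> R) (pi : nat -> R) (S A : nat -> bool) (lam : R).
Hypothesis Hs : stochastic n P.
Hypothesis Hpi : prob_measure n pi.
Hypothesis Hrev : reversible n P pi.
Hypothesis Hlam0 : 0 <= lam.
Hypothesis Hlam1 : lam < 1.
Hypothesis Hgap : forall g, ip n pi g one = 0 -> ip n pi (mv n P g) (mv n P g) <= lam * lam * ip n pi g g.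

Let pinn : forall x, (x < n)%nat -> 0 <= pi x := pi_nonneg n pi Hpi.
Let ip_nn f : 0 <= ip n pi f f := ip_nonneg n pi pinn f.
Let v := surv n P S.

Lemma surv_bounds s y : (y < n)%nat -> 0 <= v s y <= 1 /\ 0 <= mv n P (v s) y <= 1.
Proof.
  revert y. induction s; intros y Hy.
  - unfold v; simpl. unfold one. rewrite mv_const; auto. lra.
  - assert (HPv : forall z, (z < n)%nat -> 0 <= mv n P (v s) z <= 1).
    { intros z Hz. destruct Hs as [H0 _]. split.
      - unfold mv. apply rsum_nonneg. intros u Hu. apply Rmult_le_pos; auto. apply (IHs u Hu).
      - rewrite <- (mv_const n P Hs 1 z Hz). apply mv_mono; auto. intros u Hu; apply (IHs u Hu). }
    assert (Hv : forall z, (z < n)%nat -> 0 <= v (Datatypes.S s) z <= 1).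
    { intros z Hz. unfold v; simpl; fold v. destruct (S z); [lra | auto]. }
    split; auto. destruct Hs as [H0 _]. split.
    + unfold mv. apply rsum_nonneg. intros z Hz. apply Rmult_le_pos; auto. apply Hv; auto.
    + rewrite <- (mv_const n P Hs 1 y Hy). apply mv_mono; auto. intros z Hz. apply Hv; auto.
Qed.

Lemma surv_step s y : (y < n)%nat -> v (Datatypes.S s) y <= mv n P (v s) y.
Proof. intros Hy. unfold v; simpl; fold v. destruct (S y); [apply (surv_bounds s y Hy) | lra]. Qed.

Lemma hit_at_bounds s : 0 <= hit_at n P pi S A s <= measure n pi A.
Proof.
  unfold hit_at, measure. split; [apply rsum_nonneg | apply rsum_le]; intros x Hx;
    destruct (A x); try lra; destruct (surv_bounds s x Hx) as [_ H]; pose proof (pinn x Hx); unfold v in H; nra.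
Qed.

Lemma mean_zero_part f :
  ip n pi (fun y => f y - ip n pi f one) one = 0 /\
  ip n pi (fun y => f y - ip n pi f one) (fun y => f y - ip n pi f one) =
    ip n pi f f - ip n pi f one * ip n pi f one.
Proof.
  set (c := ip n pi f one).
  assert (E : forall y, (y < n)%nat -> f y - c = 1 * f y + (- c) * one y) by (intros; unfold one; ring).
  rewrite (ip_ext n pi _ one _ one E), (ip_ext n pi _ _ _ _ E E) by auto.
  rewrite !ip_lin_l, !ip_lin_r, (ip_sym n pi one f), (ip_one_one n pi Hpi). fold c. split; ring.
Qed.

Lemma P_norm_bound f :
  ip n pi (mv n P f) (mv n P f) <=
  ip n pi f one * ip n pi f one + lam * lam * (ip n pi f f - ip n pi f one * ip n pi f one).
Proof.
  set (c := ip n pi f one). set (g := fun y => f y - c).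
  destruct (mean_zero_part f) as [Hg Hgg]. fold c g in Hg, Hgg.
  assert (E : forall x, (x < n)%nat -> mv n P f x = c * one x + 1 * mv n P g x).
  { intros x Hx. rewrite (mv_ext n P f (fun y => c * one y + 1 * g y)) by (intros; unfold g, one; ring).
    rewrite mv_lin, (mv_one n P Hs x Hx). unfold one. ring. }
  rewrite (ip_ext n pi _ _ _ _ E E), !ip_lin_l, !ip_lin_r, (ip_one_one n pi Hpi).
  rewrite (ip_sym n pi one (mv n P g)), (mean_P n P pi Hs Hrev), Hg.
  pose proof (Hgap g Hg). rewrite Hgg in *. lra.
Qed.

Fixpoint Pow (j : nat) (f : nat -> R) : nat -> R :=
  match j with O => f | Datatypes.S j' => mv n P (Pow j' f) end.

Lemma Pow_ext j f g x : (x < n)%nat -> (forall y, (y < n)%nat -> f y = g y) -> Pow j f x = Pow j g x.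
Proof. revert x. induction j; intros x Hx H; simpl; auto. apply mv_ext; auto. Qed.

Lemma surv_le_Pow k r x : (x < n)%nat -> mv n P (v (k + r)) x <= Pow (Datatypes.S k) (v r) x.
Proof.
  revert x. induction k; intros x Hx; [simpl; lra |].
  change (Pow (Datatypes.S (Datatypes.S k)) (v r) x) with (mv n P (Pow (Datatypes.S k) (v r)) x).
  apply Rle_trans with (mv n P (mv n P (v (k + r))) x); apply mv_mono; auto.
  intros y Hy. apply surv_step; auto.
Qed.

Lemma Pow_shift j c g x : (x < n)%nat -> Pow j (fun y => c + g y) x = c + Pow j g x.
Proof.
  revert x. induction j; intros x Hx; simpl; auto.
  rewrite (mv_ext n P _ (fun y => c * one y + 1 * Pow j g y)) by (intros; rewrite IHj; auto; unfold one; ring).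
  rewrite mv_lin, (mv_one n P Hs x Hx). ring.
Qed.

Lemma Pow_gap j g : ip n pi g one = 0 ->
  ip n pi (Pow j g) one = 0 /\ ip n pi (Pow j g) (Pow j g) <= lam ^ (2 * j) * ip n pi g g.
Proof.
  intros H. induction j as [| j [IH1 IH2]]; [simpl; lra |].
  simpl Pow. rewrite (mean_P n P pi Hs Hrev). split; auto.
  eapply Rle_trans; [apply Hgap; auto |].
  replace (2 * Datatypes.S j)%nat with (Datatypes.S (Datatypes.S (2 * j))) by lia.
  change (lam ^ Datatypes.S (Datatypes.S (2 * j))) with (lam * (lam * lam ^ (2 * j))).
  replace (lam * (lam * lam ^ (2 * j)) * ip n pi g g) with (lam * lam * (lam ^ (2 * j) * ip n pi g g)) by ring.
  apply Rmult_le_compat_l; [nra | auto].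
Qed.

Let alpha := measure n pi A.
Let sigma := measure n pi S.
Definition indicator (B : nat -> bool) : nat -> R := fun x => if B x then 1 else 0.

Lemma ip_indicator_one B : ip n pi (indicator B) one = measure n pi B.
Proof. unfold ip, indicator, one, measure. apply rsum_ext; intros. destruct (B i); ring. Qed.

Lemma ip_indicator_sq B : ip n pi (indicator B) (indicator B) = measure n pi B.
Proof. unfold ip, indicator, measure. apply rsum_ext; intros. destruct (B i); ring. Qed.

Lemma measure_bounds B : 0 <= measure n pi B <= 1.
Proof.
  rewrite <- ip_indicator_sq. split; [apply ip_nn |].
  apply Rle_trans with (rsum n pi); [| right; apply (proj2 Hpi)]. unfold ip, indicator. apply rsum_le.
  intros x Hx. pose proof (pinn x Hx). destruct (B x); lra.
Qed.

Definition Nsurv (r : nat) : R := sqrt (ip n pi (v r) (v r)).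

Lemma Pow_norm j g : ip n pi g one = 0 ->
  sqrt (ip n pi (Pow j g) (Pow j g)) <= lam ^ j * sqrt (ip n pi g g).
Proof.
  intros Hg. rewrite <- (sqrt_pow2 (lam ^ j)) by (apply pow_le; auto).
  rewrite <- sqrt_mult by (try apply pow2_ge_0; auto).
  apply sqrt_le_1; [apply ip_nn | apply Rmult_le_pos; [apply pow2_ge_0 | auto] |].
  rewrite <- pow_mult, Nat.mul_comm. apply Pow_gap; auto.
Qed.

Lemma hit_at_spectral k r :
  hit_at n P pi S A (k + r) <= Nsurv r * (alpha + sqrt alpha * lam ^ Datatypes.S k).
Proof.
  set (c := ip n pi (v r) one). set (g := fun y => v r y - c).
  destruct (mean_zero_part (v r)) as [Hg Hgg]. fold c g in Hg, Hgg.
  set (j := Datatypes.S k).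
  assert (Hstep : hit_at n P pi S A (k + r) <= ip n pi (indicator A) (Pow j (v r))).
  { unfold hit_at, ip, indicator. apply rsum_le. intros x Hx. destruct (A x); [| lra].
    rewrite !Rmult_1_r. apply Rmult_le_compat_l; auto. apply surv_le_Pow; auto. }
  rewrite (ip_ext n pi (indicator A) (Pow j (v r)) (indicator A) (fun x => c * one x + 1 * Pow j g x))
    in Hstep by (auto; intros x Hx; rewrite (Pow_ext j (v r) (fun y => c + g y)), Pow_shift by (auto; intros; unfold g; ring);
                 unfold one; ring).
  rewrite ip_lin_r, ip_indicator_one in Hstep. fold alpha in Hstep.
  pose proof (ip_le_sqrt n pi pinn (indicator A) (Pow j g)) as HCS.
  rewrite ip_indicator_sq in HCS. fold alpha in HCS.
  assert (Hc : c <= Nsurv r).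
  { pose proof (ip_le_sqrt n pi pinn (v r) one) as H.
    rewrite (ip_one_one n pi Hpi), sqrt_1 in H. unfold Nsurv. fold c in H. lra. }
  assert (HPow : sqrt (ip n pi (Pow j g) (Pow j g)) <= lam ^ j * Nsurv r).
  { eapply Rle_trans; [apply Pow_norm; auto |]. apply Rmult_le_compat_l; [apply pow_le; auto |].
    apply sqrt_le_1; [apply ip_nn | apply ip_nn |]. rewrite Hgg.
    pose proof (Rle_0_sqr c). unfold Rsqr in *. fold c. lra. }
  assert (0 <= alpha) by apply measure_bounds.
  pose proof (sqrt_pos alpha). assert (0 <= lam ^ j) by (apply pow_le; auto).
  assert (sqrt alpha * sqrt (ip n pi (Pow j g) (Pow j g)) <= sqrt alpha * (lam ^ j * Nsurv r))
    by (apply Rmult_le_compat_l; auto).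
  assert (c * alpha <= Nsurv r * alpha) by (apply Rmult_le_compat_r; auto).
  nra.
Qed.

(** Estimate (1).  [surv (r+1)] vanishes on [S], so its mean is at most [sqrt(1 - pi(S))]
    times its norm; with the spectral gap this gives the contraction factor [q]. *)
Definition q : R := 1 - (1 - lam) * sigma.

Lemma q_bounds : 0 <= q <= 1.
Proof. unfold q. pose proof (measure_bounds S). fold sigma in H. split; nra. Qed.

Lemma mean_sq_outside r :
  ip n pi (v (Datatypes.S r)) one * ip n pi (v (Datatypes.S r)) one <=
  ip n pi (v (Datatypes.S r)) (v (Datatypes.S r)) * (1 - sigma).
Proof.
  set (f := v (Datatypes.S r)).
  assert (Hnot : ip n pi (indicator (fun y => negb (S y))) (indicator (fun y => negb (S y))) = 1 - sigma).
  { rewrite ip_indicator_sq. unfold sigma, measure. rewrite <- (proj2 Hpi) at 1.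
    rewrite <- rsum_minus. apply rsum_ext; intros. destruct (S i); simpl; ring. }
  assert (E : ip n pi f one = ip n pi f (indicator (fun y => negb (S y)))).
  { unfold ip. apply rsum_ext. intros y Hy. unfold one, indicator, f, v; simpl. destruct (S y); simpl; ring. }
  rewrite E, <- Hnot. apply ip_CS; auto.
Qed.

Lemma norm_decay_step r :
  ip n pi (v (Datatypes.S (Datatypes.S r))) (v (Datatypes.S (Datatypes.S r))) <=
  q * ip n pi (v (Datatypes.S r)) (v (Datatypes.S r)).
Proof.
  set (f := v (Datatypes.S r)). set (X := ip n pi f f). set (c := ip n pi f one).
  assert (Hkill : ip n pi (v (Datatypes.S (Datatypes.S r))) (v (Datatypes.S (Datatypes.S r))) <=
                  ip n pi (mv n P f) (mv n P f)).
  { unfold ip. apply rsum_le. intros y Hy. unfold v; simpl; fold v. fold f.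
    destruct (S y); [| right; reflexivity]. rewrite !Rmult_0_r, Rmult_assoc.
    apply Rmult_le_pos; [apply pinn; auto | apply Rle_0_sqr]. }
  pose proof (P_norm_bound f) as HP. fold c X in HP.
  pose proof (mean_sq_outside r) as Hc. fold f c X in Hc.
  pose proof (measure_bounds S). fold sigma in H.
  assert (0 <= X) by apply ip_nn. assert (lam * lam <= lam) by nra.
  assert (X * (1 - lam * lam) * sigma >= X * (1 - lam) * sigma).
  { apply Rle_ge, Rmult_le_compat_r; [lra |]. apply Rmult_le_compat_l; lra. }
  assert ((1 - lam * lam) * (c * c) <= (1 - lam * lam) * (X * (1 - sigma))) by (apply Rmult_le_compat_l; nra).
  unfold q. nra.
Qed.

Lemma norm_decay r : Nsurv (Datatypes.S r) <= sqrt q ^ r.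
Proof.
  assert (H : ip n pi (v (Datatypes.S r)) (v (Datatypes.S r)) <= q ^ r).
  { induction r.
    - rewrite pow_O, <- (ip_one_one n pi Hpi). unfold ip. apply rsum_le. intros y Hy.
      unfold one. destruct (surv_bounds 1 y Hy) as [[H1 H2] _].
      pose proof (pinn y Hy). rewrite !Rmult_assoc. apply Rmult_le_compat_l; auto. nra.
    - eapply Rle_trans; [apply norm_decay_step |]. simpl. pose proof q_bounds.
      apply Rmult_le_compat_l; [lra | auto]. }
  unfold Nsurv. apply Rle_trans with (sqrt (q ^ r)).
  { apply sqrt_le_1; [apply ip_nn | apply pow_le, q_bounds | exact H]. }
  right. clear H. induction r; [apply sqrt_1 |].
  simpl. rewrite sqrt_mult by (try apply pow_le; apply q_bounds). f_equal. apply IHr.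
Qed.

(** Combining (1) and (2) with [r = m + 1, m + 2] and [k = m]. *)
Lemma hit_at_pair m :
  hit_at n P pi S A (2 * m + 1) + hit_at n P pi S A (2 * m + 2) <=
  2 * (sqrt q ^ m * alpha + sqrt alpha * lam ^ m).
Proof.
  pose proof (measure_bounds A). fold alpha in H. pose proof (sqrt_pos alpha). pose proof q_bounds.
  assert (Hr0 : 0 <= sqrt q) by apply sqrt_pos.
  assert (Hr1 : sqrt q <= 1) by (rewrite <- sqrt_1; apply sqrt_le_1; lra).
  assert (Hl : 0 <= lam ^ m) by (apply pow_le; auto).
  assert (Hlm : lam ^ Datatypes.S m <= lam ^ m)
    by (simpl; assert (lam * lam ^ m <= 1 * lam ^ m) by (apply Rmult_le_compat_r; lra); lra).
  assert (Hrm : 0 <= sqrt q ^ m) by (apply pow_le; auto).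
  assert (Hrm1 : sqrt q ^ Datatypes.S m <= sqrt q ^ m)
    by (simpl; assert (sqrt q * sqrt q ^ m <= 1 * sqrt q ^ m) by (apply Rmult_le_compat_r; lra); lra).
  assert (Hrle1 : sqrt q ^ m <= 1) by (rewrite <- (pow1 m); apply pow_incr; lra).
  assert (Hk : forall r, Nsurv r <= sqrt q ^ m ->
            hit_at n P pi S A (m + r) <= sqrt q ^ m * alpha + sqrt alpha * lam ^ m).
  { intros r Hr. eapply Rle_trans; [apply hit_at_spectral |].
    assert (0 <= Nsurv r) by apply sqrt_pos.
    assert (0 <= sqrt alpha * lam ^ Datatypes.S m) by (apply Rmult_le_pos; auto; apply pow_le; auto).
    apply Rle_trans with (sqrt q ^ m * (alpha + sqrt alpha * lam ^ Datatypes.S m)); [apply Rmult_le_compat_r; lra |].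
    assert (sqrt alpha * lam ^ Datatypes.S m <= sqrt alpha * lam ^ m) by (apply Rmult_le_compat_l; auto).
    assert (sqrt q ^ m * (sqrt alpha * lam ^ m) <= 1 * (sqrt alpha * lam ^ m)) by (apply Rmult_le_compat_r; nra).
    nra. }
  replace (2 * m + 1)%nat with (m + Datatypes.S m)%nat by lia.
  replace (2 * m + 2)%nat with (m + Datatypes.S (Datatypes.S m))%nat by lia.
  pose proof (Hk (Datatypes.S m) (norm_decay m)).
  pose proof (Hk (Datatypes.S (Datatypes.S m)) (Rle_trans _ _ _ (norm_decay (Datatypes.S m)) Hrm1)).
  lra.
Qed.
End Decay.

Lemma geom_le x N : 0 <= x < 1 -> rsum N (fun m => x ^ m) <= / (1 - x).
Proof.
  intros Hx.
  assert (E : rsum N (fun m => x ^ m) * (1 - x) = 1 - x ^ N).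
  { induction N; [rewrite rsum_0; simpl; ring |]. rewrite rsum_S, Rmult_plus_distr_r, IHN. simpl. ring. }
  assert (0 <= x ^ N) by (apply pow_le; lra).
  apply Rmult_le_reg_r with (r := 1 - x); [lra |]. rewrite E, Rinv_l by lra. lra.
Qed.

Lemma pow_le_exp l k : 0 <= l -> l ^ k <= exp (- (1 - l) * INR k).
Proof.
  intros Hl.
  replace (exp (- (1 - l) * INR k)) with (exp (- (1 - l)) ^ k).
  - apply pow_incr. split; auto. pose proof (exp_ineq1_le (- (1 - l))). lra.
  - induction k; [simpl; rewrite Rmult_0_r, exp_0; auto |].
    simpl pow. rewrite IHk, <- exp_plus, S_INR. f_equal. ring.
Qed.

Lemma ln_le_sub1 x : 0 < x -> ln x <= x - 1.
Proof. intros Hx. pose proof (exp_ineq1_le (ln x)). rewrite exp_ln in H by auto. lra. Qed.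

Lemma cutoff_time y l : 0 < y < 1 -> 0 <= l < 1 ->
  exists T : nat, l ^ T <= sqrt y /\ INR T <= ln (/ y) / (2 * (1 - l)) + 1.
Proof.
  intros Hy Hl.
  set (X := ln (/ y) / (2 * (1 - l))).
  assert (HlnY : 0 < ln (/ y)).
  { rewrite <- ln_1. apply ln_increasing; [lra |]. rewrite <- Rinv_1. apply Rinv_lt_contravar; lra. }
  assert (HX : 0 <= X) by (unfold X; apply Rlt_le, Rdiv_lt_0_compat; lra).
  destruct (archimed X) as [H1 H2].
  assert (Hup : (0 <= up X)%Z) by (apply le_IZR; lra).
  exists (Z.to_nat (up X)).
  rewrite INR_IZR_INZ, Z2Nat.id by auto. split; [| lra].
  eapply Rle_trans; [apply pow_le_exp; lra |].
  rewrite INR_IZR_INZ, Z2Nat.id by auto.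
  replace (sqrt y) with (exp (- ln (/ y) / 2)).
  - left. apply exp_increasing.
    assert (HX2 : 2 * (1 - l) * X = ln (/ y)) by (unfold X; field; lra). nra.
  - rewrite ln_Rinv by lra.
    assert (E : exp (- - ln y / 2) * exp (- - ln y / 2) = y).
    { rewrite <- exp_plus. replace (- - ln y / 2 + - - ln y / 2) with (ln y) by field. apply exp_ln; lra. }
    rewrite <- (sqrt_square (exp (- - ln y / 2))) by (apply Rlt_le, exp_pos). rewrite E. reflexivity.
Qed.

(** Summing a sequence whose consecutive pairs satisfy the two estimates of the previous
    section, using the trivial bound [al] before the cutoff [T] and the spectral bound after. *)
Lemma sum_from_pairs (a : nat -> R) al rho l t T :
  0 <= al -> 0 <= rho < 1 -> 0 <= l < 1 ->
  (forall s, 0 <= a s <= al) ->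
  (forall m, a (2 * m + 1)%nat + a (2 * m + 2)%nat <= 2 * (rho ^ m * al + sqrt al * l ^ m)) ->
  rsum (S t) a <= al + 2 * al / (1 - rho) + 2 * (INR T * al + sqrt al * l ^ T / (1 - l)).
Proof.
  intros Hal Hrho Hl Ha Hpair.
  set (c := fun m => if Nat.ltb m T then al else sqrt al * l ^ m).
  assert (Hc : forall m, 0 <= c m).
  { intros m. unfold c. destruct (Nat.ltb m T); auto. apply Rmult_le_pos; [apply sqrt_pos | apply pow_le; lra]. }
  assert (Hpairs : rsum (S t) (fun m => a (2 * m + 1)%nat + a (2 * m + 2)%nat) <=
                   2 * al * rsum (S t) (fun m => rho ^ m) + 2 * rsum (T + S t) c).
  { apply Rle_trans with (2 * al * rsum (S t) (fun m => rho ^ m) + 2 * rsum (S t) c).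
    - rewrite <- !rsum_scal, <- rsum_plus. apply rsum_le. intros m _.
      unfold c. destruct (Nat.ltb m T).
      + pose proof (Ha (2 * m + 1)%nat). pose proof (Ha (2 * m + 2)%nat).
        assert (0 <= rho ^ m) by (apply pow_le; lra). nra.
      + pose proof (Hpair m). lra.
    - apply Rplus_le_compat_l, Rmult_le_compat_l; [lra |]. apply rsum_mono_len; auto; lia. }
  assert (Hhead : rsum T c = INR T * al).
  { rewrite <- rsum_const. apply rsum_ext. intros i Hi. unfold c. destruct (Nat.ltb_spec i T); [auto | lia]. }
  assert (Htail : rsum (S t) (fun i => c (T + i)%nat) <= sqrt al * l ^ T / (1 - l)).
  { rewrite (rsum_ext _ _ (fun i => (sqrt al * l ^ T) * l ^ i)).
    - rewrite rsum_scal. unfold Rdiv. apply Rmult_le_compat_l; [| apply geom_le; auto].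
      apply Rmult_le_pos; [apply sqrt_pos | apply pow_le; lra].
    - intros i Hi. unfold c. destruct (Nat.ltb_spec (T + i) T); [lia |]. rewrite pow_add. ring. }
  rewrite rsum_split, Hhead in Hpairs.
  pose proof (geom_le rho (S t) Hrho).
  apply Rle_trans with (rsum (1 + 2 * S t) a); [apply rsum_mono_len; [lia | intros; apply Ha] |].
  rewrite rsum_pairs. pose proof (Ha 0%nat). unfold Rdiv.
  assert (2 * al * rsum (S t) (fun m => rho ^ m) <= 2 * al * / (1 - rho)) by (apply Rmult_le_compat_l; lra).
  lra.
Qed.

Lemma inv_one_minus_sqrt u : 0 < u <= 1 -> / (1 - sqrt (1 - u)) <= 2 / u.
Proof.
  intros Hu. set (r := sqrt (1 - u)).
  assert (Hr : 0 <= r < 1).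
  { unfold r. split; [apply sqrt_pos |].
    apply Rlt_le_trans with (sqrt 1); [apply sqrt_lt_1; lra | rewrite sqrt_1; lra]. }
  assert (Hr2 : r * r = 1 - u) by (apply sqrt_sqrt; lra).
  replace (2 / u) with (/ (u / 2)) by (field; lra).
  apply Rinv_le_contravar; [lra | nra].
Qed.

Lemma entropy_le_one s : 0 < s -> s * ln (/ s) <= 1.
Proof.
  intros Hs. pose proof (ln_le_sub1 (/ s) ltac:(apply Rinv_0_lt_compat; lra)).
  apply Rle_trans with (s * (/ s - 1)); [apply Rmult_le_compat_l; lra |].
  rewrite Rmult_minus_distr_l, Rinv_r by lra. lra.
Qed.

Lemma ln_inv_gt1 eps : 0 < eps < / 4 -> 1 < ln (1 / eps).
Proof.
  intros Heps.
  assert (H4 : 4 < / eps).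
  { rewrite <- (Rinv_inv 4). apply Rinv_lt_contravar; [apply Rmult_lt_0_compat |]; lra. }
  assert (He : exp 1 < 1 / eps) by (replace (1 / eps) with (/ eps) by (field; lra); pose proof exp_le_3; lra).
  apply ln_increasing in He; [| apply exp_pos]. rewrite ln_exp in He. exact He.
Qed.

Lemma geometric_part al sg g eps : 0 < g <= 1 -> 0 < sg <= 1 -> 0 <= al -> al <= eps * sg ->
  2 * al / (1 - sqrt (1 - g * sg)) <= 4 * (eps / g).
Proof.
  intros Hg Hsg Hal Halsg. unfold Rdiv at 1.
  apply Rle_trans with (2 * al * (2 / (g * sg))).
  - apply Rmult_le_compat_l; [lra |]. apply inv_one_minus_sqrt. split; nra.
  - replace (2 * al * (2 / (g * sg))) with (4 * (al / sg) * / g) by (field; lra).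
    replace (4 * (eps / g)) with (4 * eps * / g) by (field; lra).
    apply Rmult_le_compat_r; [apply Rlt_le, Rinv_0_lt_compat; lra |].
    apply Rmult_le_compat_l; [lra |]. apply Rmult_le_reg_r with (r := sg); [lra |].
    unfold Rdiv. rewrite Rmult_assoc, Rinv_l by lra. lra.
Qed.

Lemma head_part (T : nat) al sg g eps : 0 < eps < 1 -> 0 < g -> 0 < sg <= 1 -> 0 <= al ->
  al <= eps * sg -> INR T <= ln (/ (eps * sg)) / (2 * g) + 1 ->
  INR T * al <= (eps * ln (1 / eps) + eps) / (2 * g) + eps.
Proof.
  intros Heps Hg Hsg Hal Halsg HT. set (L := ln (1 / eps)).
  assert (0 <= ln (/ (eps * sg)) / (2 * g) + 1) by (pose proof (pos_INR T); lra).
  apply Rle_trans with ((ln (/ (eps * sg)) / (2 * g) + 1) * (eps * sg));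
    [apply Rmult_le_compat; [apply pos_INR | lra | lra | lra] |].
  assert (Hln : ln (/ (eps * sg)) = L + ln (/ sg)).
  { unfold L. rewrite Rinv_mult, ln_mult by (apply Rinv_0_lt_compat; lra). unfold Rdiv. rewrite Rmult_1_l. auto. }
  pose proof (entropy_le_one sg ltac:(lra)). rewrite Hln.
  replace ((((L + ln (/ sg)) / (2 * g)) + 1) * (eps * sg)) with
    ((eps * (sg * L) + eps * (sg * ln (/ sg))) / (2 * g) + eps * sg) by (field; lra).
  assert (0 < L).
  { unfold L. rewrite <- ln_1. apply ln_increasing; [lra |].
    unfold Rdiv. rewrite Rmult_1_l, <- Rinv_1. apply Rinv_lt_contravar; lra. }
  assert (eps * (sg * L) <= eps * L) by (apply Rmult_le_compat_l; nra).
  assert (eps * (sg * ln (/ sg)) <= eps) by (rewrite <- (Rmult_1_r eps) at 2; apply Rmult_le_compat_l; lra).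
  unfold Rdiv. assert (0 < / (2 * g)) by (apply Rinv_0_lt_compat; lra). nra.
Qed.

Lemma sum_bound (a : nat -> R) al sg eps l t :
  0 < eps < / 4 -> 0 <= l < 1 -> 0 <= al -> al <= eps * sg -> 0 <= sg <= 1 ->
  (forall s, 0 <= a s <= al) ->
  (forall m, a (2 * m + 1)%nat + a (2 * m + 2)%nat <=
             2 * (sqrt (1 - (1 - l) * sg) ^ m * al + sqrt al * l ^ m)) ->
  rsum (S t) a <= 11 * (eps * ln (1 / eps)) / (1 - l).
Proof.
  intros Heps Hl Hal Halsg Hsg Ha Hpair.
  set (g := 1 - l). assert (Hg : 0 < g <= 1) by (unfold g; lra).
  set (L := ln (1 / eps)). assert (HL : 1 < L) by (apply ln_inv_gt1; auto).
  replace (11 * (eps * ln (1 / eps)) / (1 - l)) with (11 * L * (eps / g)) by (unfold g, L; field; lra).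
  assert (Hepsg : eps <= eps / g).
  { unfold Rdiv. rewrite <- (Rmult_1_r eps) at 1. apply Rmult_le_compat_l; [lra |].
    rewrite <- Rinv_1. apply Rinv_le_contravar; lra. }
  destruct (Rle_lt_or_eq_dec 0 al Hal) as [Halp | <-].
  2: { apply Rle_trans with (rsum (S t) (fun _ => 0)); [apply rsum_le; intros; apply Ha |].
       rewrite rsum_zero. assert (0 < eps / g) by (apply Rdiv_lt_0_compat; lra). nra. }
  assert (Hsgp : 0 < sg) by nra.
  set (y := eps * sg). assert (Hy : 0 < y < 1) by (unfold y; split; nra).
  destruct (cutoff_time y l Hy Hl) as [T [HlT HT]]. fold g in HT.
  pose proof (sum_from_pairs a al (sqrt (1 - g * sg)) l t T Hal) as Hsum.
  assert (Hrho : 0 <= sqrt (1 - g * sg) < 1).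
  { split; [apply sqrt_pos |].
    apply Rlt_le_trans with (sqrt 1); [apply sqrt_lt_1; nra | rewrite sqrt_1; lra]. }
  specialize (Hsum Hrho Hl Ha Hpair). fold g in Hsum.
  assert (Hgeo : 2 * al / (1 - sqrt (1 - g * sg)) <= 4 * (eps / g)) by (apply (geometric_part al sg g eps); lra).
  assert (Hhead : INR T * al <= (eps * L + eps) / (2 * g) + eps) by (apply (head_part T al sg g eps); auto; lra).
  assert (Htail : sqrt al * l ^ T / g <= eps / g).
  { unfold Rdiv. apply Rmult_le_compat_r; [apply Rlt_le, Rinv_0_lt_compat; lra |].
    apply Rle_trans with (sqrt y * sqrt y); [| rewrite sqrt_sqrt; unfold y; nra].
    apply Rmult_le_compat; [apply sqrt_pos | apply pow_le; lra | apply sqrt_le_1; unfold y in *; lra | auto]. }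
  assert (HEL : (eps * L + eps) / (2 * g) = (eps / g) * L / 2 + (eps / g) / 2) by (field; lra).
  assert (al <= eps) by nra.
  assert (HE : eps / g <= eps / g * L) by (assert (0 <= eps / g) by lra; nra).
  lra.
Qed.

Theorem mainTheorem7 :
  exists C : R, 0 < C /\
  exists eps0 : R, 0 < eps0 /\
  forall eps : R, 0 < eps < eps0 ->
  forall (n : nat) (P : nat -> nat -> R) (pi : nat -> R),
    stochastic n P -> irreducible n P -> aperiodic n P ->
    prob_measure n pi -> reversible n P pi ->
  forall lam : R, slem n P lam ->
  forall (A S : nat -> bool) (h : nat -> nat -> R),
    (forall x, (x < n)%nat -> A x = true -> S x = true) ->
    measure n pi A <= eps * measure n pi S ->
    harmonic_from n P S h ->
    harm_stat n pi h A <= C * (eps * ln (1 / eps)) / (1 - lam).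
Proof.
  exists 11. split; [lra |]. exists (/ 4). split; [lra |].
  intros eps Heps n P pi Hs Hirr Hap Hpi Hrev lam Hslem A S h HAS HAeps Hh.
  assert (Hn : (1 <= n)%nat).
  { destruct n; [| lia]. exfalso. destruct Hpi as [_ H]. rewrite rsum_0 in H. lra. }
  pose proof (pi_pos n P pi Hs Hpi Hrev Hirr) as Hpos.
  destruct (spectral_gap n P pi Hs Hpi Hrev Hpos Hirr Hap Hn lam Hslem) as [Hl0 [Hl1 Hgap]].
  apply (limit_le _ _ _ (harm_limit n P pi S A h Hh)). intros t.
  rewrite (truncated_harmonic n P pi S Hs Hrev A t HAS).
  apply (sum_bound _ (measure n pi A) (measure n pi S)); auto.
  - apply measure_bounds; auto.
  - apply measure_bounds; auto.
  - apply hit_at_bounds; auto.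
  - exact (hit_at_pair n P pi S A lam Hs Hpi Hrev Hl0 Hl1 Hgap).
Qed.
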